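(* Let $q(x,y)=ax^2+bxy+cy^2$ with $a,b,c\in\mathbb{Z}$ be a positive definite binary quadratic form (so $\Delta(q)=b^2-4ac<0$ and $a>0$), and let $k\in\mathbb{Z}$. Then the equation $q(x,y)=k$ has at most $4$ solutions $(x,y)\in\mathbb{Z}^2$ satisfying $$|x|\le\frac{|k|^{1/4}}{\sqrt{-\Delta(q)}}.$$ *)

From Stdlib Require Import Reals ZArith List.
Open Scope Z_scope.

Definition qf (a b c x y : Z) : Z := a * x ^ 2 + b * x * y + c * y ^ 2.

Definition qdisc (a b c : Z) : Z := b ^ 2 - 4 * a * c.

(* Put D := -Δ(q) > 0 and t := 2cy + bx, so that completing the square gives
   t^2 + D x^2 = 4ck.  The bound on |x| says (D x^2)^2 <= k, which forces
   D x^2 <= |t|; two decompositions u^2 + s = 4ck with 0 <= s <= u must have the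
   same u, because consecutive squares are more than u apart.  Hence |t| and then
   |x| take the same value on every solution in the box, and as y is recovered
   from t and x, there are at most the four choices of signs for (t, x). *)

From Stdlib Require Import Reals ZArith List Lia Lra Psatz.
Import ListNotations.
Open Scope Z_scope.

Lemma quartic_le_of_Rabs_le (x D K : Z) : 0 < D -> 0 <= K ->
  (Rabs (IZR x) <= sqrt (sqrt (IZR K)) / sqrt (IZR D))%R -> D ^ 2 * x ^ 4 <= K.
Proof.
  intros hD hK hx.
  assert (hDr : (0 < IZR D)%R) by (apply IZR_lt; lia).
  assert (hKr : (0 <= IZR K)%R) by (apply IZR_le; lia).
  assert (hsD : (0 < sqrt (IZR D))%R) by (apply sqrt_lt_R0; lra).
  set (r := Rabs (IZR x)) in hx.
  assert (hr : (0 <= r)%R) by apply Rabs_pos.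
  assert (h1 : (r * sqrt (IZR D) <= sqrt (sqrt (IZR K)))%R).
  { apply (Rmult_le_compat_r (sqrt (IZR D))) in hx; [|lra].
    now replace (_ / _ * _)%R with (sqrt (sqrt (IZR K))) in hx by (field; lra). }
  assert (h2 : (r ^ 2 * IZR D <= sqrt (IZR K))%R).
  { rewrite <- (pow2_sqrt (IZR D)), <- Rpow_mult_distr, <- (pow2_sqrt (sqrt (IZR K)))
      by (try apply sqrt_pos; lra).
    apply pow_incr; split; [apply Rmult_le_pos|]; try lra; apply sqrt_pos. }
  assert (h3 : ((r ^ 2 * IZR D) ^ 2 <= IZR K)%R).
  { rewrite <- (pow2_sqrt (IZR K)) by lra.
    apply pow_incr; split; [apply Rmult_le_pos; [apply pow2_ge_0|lra]|exact h2]. }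
  apply le_IZR; rewrite mult_IZR.
  change (D ^ 2) with (D ^ Z.of_nat 2); change (x ^ 4) with (x ^ Z.of_nat 4).
  rewrite <- !pow_IZR.
  unfold r in h3; rewrite pow2_abs in h3; nra.
Qed.

Lemma sq_add_le_inj (u1 u2 s1 s2 : Z) : 0 <= s1 <= u1 -> 0 <= s2 <= u2 ->
  u1 ^ 2 + s1 = u2 ^ 2 + s2 -> u1 = u2.
Proof. intros; nia. Qed.

Lemma le_Zabs_of_sq_le (s t : Z) : 0 <= s -> s ^ 2 <= t ^ 2 -> s <= Z.abs t.
Proof. intros; destruct (Z.abs_spec t) as [[? ->]|[? ->]]; nia. Qed.

Lemma Zabs_sq (t : Z) : Z.abs t ^ 2 = t ^ 2.
Proof. destruct (Z.abs_spec t) as [[_ ->]|[_ ->]]; ring. Qed.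

Section PositiveDefinite.

Variables a b c : Z.
Hypothesis ha : 0 < a.
Hypothesis hd : qdisc a b c < 0.

Definition qlin (x y : Z) : Z := 2 * c * y + b * x.

Lemma qf_mul4c (x y : Z) : qlin x y ^ 2 - qdisc a b c * x ^ 2 = 4 * c * qf a b c x y.
Proof. unfold qlin, qdisc, qf; ring. Qed.

Lemma qdisc_lt0_c_gt0 : 0 < c.
Proof. unfold qdisc in hd; nia. Qed.

Lemma qf_ge0 (x y : Z) : 0 <= qf a b c x y.
Proof.
  assert (e : 4 * a * qf a b c x y = (2 * a * x + b * y) ^ 2 - qdisc a b c * y ^ 2)
    by (unfold qf, qdisc; ring).
  nia.
Qed.

Variable k : Z.

Definition boxed_sol (p : Z * Z) : Prop :=
  qf a b c (fst p) (snd p) = k /\ qdisc a b c ^ 2 * fst p ^ 4 <= k.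

Lemma boxed_sol_le_qlin {p : Z * Z} : boxed_sol p ->
  - qdisc a b c * fst p ^ 2 <= Z.abs (qlin (fst p) (snd p)).
Proof.
  destruct p as [x y]; intros [hq hbox]; cbn [fst snd] in *.
  pose proof (qf_mul4c x y) as ht; pose proof qdisc_lt0_c_gt0 as hc.
  set (s := - qdisc a b c * x ^ 2) in *.
  assert (hs : 0 <= s) by (unfold s; nia).
  assert (hsk : s ^ 2 <= k) by (unfold s; nia).
  assert (ht' : qlin x y ^ 2 = 4 * c * k - s) by (unfold s; rewrite <- hq; lia).
  clearbody s; clear ht hbox.
  assert (hsk' : s <= k) by nia.
  apply le_Zabs_of_sq_le; [exact hs|]; nia.
Qed.

Lemma boxed_sol_Zabs_qlin {p1 p2 : Z * Z} : boxed_sol p1 -> boxed_sol p2 ->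
  Z.abs (qlin (fst p1) (snd p1)) = Z.abs (qlin (fst p2) (snd p2)).
Proof.
  intros h1 h2.
  pose proof (boxed_sol_le_qlin h1) as b1; pose proof (boxed_sol_le_qlin h2) as b2.
  destruct p1 as [x1 y1], p2 as [x2 y2], h1 as [q1 _], h2 as [q2 _]; cbn [fst snd] in *.
  pose proof (qf_mul4c x1 y1) as e1; pose proof (qf_mul4c x2 y2) as e2.
  rewrite <- Zabs_sq in e1, e2.
  apply (sq_add_le_inj _ _ (- qdisc a b c * x1 ^ 2) (- qdisc a b c * x2 ^ 2)); nia.
Qed.

Lemma boxed_sol_Zabs_fst {p1 p2 : Z * Z} : boxed_sol p1 -> boxed_sol p2 ->
  Z.abs (fst p1) = Z.abs (fst p2).
Proof.
  intros h1 h2.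
  pose proof (boxed_sol_Zabs_qlin h1 h2) as ht.
  destruct p1 as [x1 y1], p2 as [x2 y2], h1 as [q1 _], h2 as [q2 _]; cbn [fst snd] in *.
  pose proof (qf_mul4c x1 y1) as e1; pose proof (qf_mul4c x2 y2) as e2.
  rewrite <- Zabs_sq, ht, Zabs_sq in e1.
  assert (hx : x1 ^ 2 = x2 ^ 2) by nia.
  rewrite <- (Zabs_sq x1), <- (Zabs_sq x2) in hx.
  apply Z.pow_inj_l with 2; try lia; apply Z.abs_nonneg.
Qed.

Lemma qlin_inj (p1 p2 : Z * Z) :
  (qlin (fst p1) (snd p1), fst p1) = (qlin (fst p2) (snd p2), fst p2) -> p1 = p2.
Proof.
  destruct p1 as [x1 y1], p2 as [x2 y2]; cbn [fst snd].
  intros [= ht ->]; unfold qlin in ht; pose proof qdisc_lt0_c_gt0 as hc.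
  f_equal; apply (Z.mul_reg_l _ _ (2 * c)); lia.
Qed.

Lemma boxed_sols_length (l : list (Z * Z)) : NoDup l ->
  (forall p, In p l -> boxed_sol p) -> (length l <= 4)%nat.
Proof.
  destruct l as [|p0 l]; intros hnd hsol; [simpl; lia|].
  set (T := Z.abs (qlin (fst p0) (snd p0))); set (X := Z.abs (fst p0)).
  set (f := fun p : Z * Z => (qlin (fst p) (snd p), fst p)).
  rewrite <- (length_map f).
  apply (NoDup_incl_length (l' := [(T, X); (T, - X); (- T, X); (- T, - X)])).
  - apply NoDup_map_NoDup_ForallPairs; [|exact hnd].
    intros p1 p2 _ _; apply qlin_inj.
  - intros z hz; apply in_map_iff in hz as [p [<- hp]].
    pose proof (boxed_sol_Zabs_qlin (hsol p0 (in_eq _ _)) (hsol p hp)) as hT.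
    pose proof (boxed_sol_Zabs_fst (hsol p0 (in_eq _ _)) (hsol p hp)) as hX.
    fold T in hT; fold X in hX; unfold f; simpl.
    destruct (Z.abs_spec (qlin (fst p) (snd p))) as [[_ E1]|[_ E1]];
      destruct (Z.abs_spec (fst p)) as [[_ E2]|[_ E2]];
      rewrite E1 in hT; rewrite E2 in hX;
      [left | right; left | right; right; left | right; right; right; left];
      f_equal; lia.
Qed.

End PositiveDefinite.

Theorem lemma1 (a b c k : Z) (ha : (0 < a)%Z) (hd : (qdisc a b c < 0)%Z)
  (l : list (Z * Z)) :
  NoDup l ->
  (forall p : Z * Z, In p l ->
     (qf a b c (fst p) (snd p) = k)%Z /\
     (Rabs (IZR (fst p)) <= sqrt (sqrt (IZR (Z.abs k))) / sqrt (IZR (- qdisc a b c)%Z))%R) ->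
  (length l <= 4)%nat.
Proof.
  intros hnd hl.
  apply (boxed_sols_length a b c ha hd k); [exact hnd|].
  intros p hp; destruct (hl p hp) as [hq hx]; split; [exact hq|].
  assert (hk : 0 <= k) by (rewrite <- hq; apply (qf_ge0 a b c ha hd)).
  replace (qdisc a b c ^ 2) with ((- qdisc a b c) ^ 2) by ring.
  rewrite <- (Z.abs_eq k) by exact hk.
  apply quartic_le_of_Rabs_le; [lia | lia | exact hx].
Qed.
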